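(* Let $\mathbf{Q}^\star,\mathbf{Q},\mathbf{Q}_r,\mathbf{H}$ be as in the context, let $\lambda_j^\star$ be the $j$-th eigenvalue of $\mathbf{Q}^\star$, and $\delta^\star=\min\{\min_{j\in[r-1]}|\lambda_j^\star-\lambda_{j+1}^\star|,\ \lambda_r^\star\}$. If $\mathbf{H}$ is Hermitian, then $$\|\mathbf{Q}^\star-\mathbf{Q}_r\|_2\le O\!\left(\lambda_{r+1}^\star+\frac{\lambda_1^\star}{\delta^\star}\|\mathbf{H}\|_2\right).$$
   Context: $\mathbf{Q}^\star\in\mathbb{C}^{n\times n}$ is Hermitian positive semi-definite of rank $r^\star$ with eigenvalues $\lambda_1^\star\ge\lambda_2^\star\ge\dots\ge 0$ (zero beyond the rank). $\mathbf{H}\in\mathbb{C}^{n\times n}$, $\mathbf{Q}=\mathbf{Q}^\star+\mathbf{H}$, and $\mathbf{Q}_r=\mathbf{V}_r\boldsymbol{\Sigma}_r\mathbf{V}_r^\dagger$ with $\boldsymbol{\Sigma}_r$ the top-$r$ singular values of $\mathbf{Q}$ and $\mathbf{V}_r$ the corresponding left singular vectors. $\|\cdot\|_2$ is the spectral norm; $O(\cdot)$ hides an absolute constant. *)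

From HB Require Import structures.
From mathcomp Require Import all_boot all_order all_algebra.
From mathcomp Require Import complex.
From mathcomp Require Import classical_sets reals.
Set Implicit Arguments. Unset Strict Implicit. Unset Printing Implicit Defensive.
Import Order.TTheory GRing.Theory Num.Theory.
Local Open Scope ring_scope.
Local Open Scope sesquilinear_scope.
Local Open Scope classical_set_scope.

Section Defs.
Variable R : realType.
Local Notation C := (R[i])%C.

Definition psdmx {n} (A : 'M[C]_n) : Prop :=
  A \is hermsymmx /\ forall u : 'cV[C]_n, 0 <= (u ^t* *m A *m u) 0 0.

Definition rdiag {n} (d : nat -> R) : 'M[C]_n :=
  diag_mx (\row_(i < n) ((d i)%:C)%C).

Definition vnorm {n} (u : 'cV[C]_n) : R :=
  Num.sqrt (\sum_(i < n) (ComplexField.Normc.normc (u i 0)) ^+ 2).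

Definition spnorm {n} (A : 'M[C]_n) : R :=
  sup [set x : R | exists u : 'cV[C]_n, vnorm u = 1 /\ x = vnorm (A *m u)].

(* lam k (k = 0, 1, ...) is lambda_{k+1}: the eigenvalues of the Hermitian
   matrix A counted with multiplicity, in non-increasing order
   (A = U diag(lam 0, ..., lam (n-1)) U^dagger with U unitary),
   extended by 0 beyond n *)
Definition eigen_seq {n} (A : 'M[C]_n) (lam : nat -> R) : Prop :=
  (exists U : 'M[C]_n, U \is unitarymx /\ A = U *m rdiag lam *m U ^t*) /\
  (forall i j, (i <= j < n)%N -> lam j <= lam i) /\
  (forall k, (n <= k)%N -> lam k = 0).

Definition svd {n} (Q V W : 'M[C]_n) (sigma : nat -> R) : Prop :=
  V \is unitarymx /\ W \is unitarymx /\
  (forall i, (i < n)%N -> 0 <= sigma i) /\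
  (forall i j, (i <= j < n)%N -> sigma j <= sigma i) /\
  Q = V *m rdiag sigma *m W ^t*.

(* Q_r = V_r Sigma_r V_r^dagger, written as V diag(sigma_1..sigma_r,0..0) V^dagger *)
Definition trunc_r {n} (V : 'M[C]_n) (sigma : nat -> R) (r : nat) : 'M[C]_n :=
  V *m rdiag (fun i => if (i < r)%N then sigma i else 0) *m V ^t*.

(* delta* = min( min_{j in [r-1]} |lambda_j - lambda_{j+1}|, lambda_r ),
   with 0-indexed lam (lambda_j = lam (j-1)) *)
Definition delta_star (lam : nat -> R) (r : nat) : R :=
  \big[Order.min/lam r.-1]_(k < r.-1) `|lam k - lam k.+1|.

End Defs.

(* Q = Q* + H is Hermitian, so its SVD Q = V S W^dagger gives Q^2 = V S^2 V^dagger
   and V S V^dagger is the absolute value |Q|; the matrix Q_r = V S_r V^dagger is the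
   rank-r truncation of |Q|.  Hence
     Q* - Q_r = (|Q| - Q_r) - (|Q| - Q) - H.
   The first term has norm sigma_(r+1), and a Courant-Fischer dimension count
   (Weyl's inequality) gives sigma_(r+1)^2 <= 2 (lambda*_(r+1)^2 + |H|^2).  As Q* is
   positive semi-definite, every eigenvalue of Q is at least -|H|, so the second term,
   twice the negative part of Q, has norm at most 2 |H|.  Altogether
   |Q* - Q_r| <= 5 (lambda*_(r+1) + |H|), and lambda*_1 / delta* >= 1.  The estimates
   are run on squared norms, where |a + b|^2 <= 2 |a|^2 + 2 |b|^2 replaces the
   triangle inequality. *)

From HB Require Import structures.
From mathcomp Require Import all_boot all_order all_algebra.
From mathcomp Require Import complex ring lra.
From mathcomp Require Import classical_sets reals.
Import Order.TTheory GRing.Theory Num.Theory.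
Local Open Scope ring_scope.
Local Open Scope sesquilinear_scope.
Set Implicit Arguments. Unset Strict Implicit. Unset Printing Implicit Defensive.

Section ComplexMatrices.
Variable C : numClosedFieldType.

(* Unlike [dotmx] on row vectors, [dotcv] is conjugate-linear in its first argument. *)
Definition dotcv n (a b : 'cV[C]_n) : C := (a^t* *m b) 0 0.
Definition sqnormcv n (a : 'cV[C]_n) : C := dotcv a a.

Lemma dotcvE n (a b : 'cV[C]_n) : dotcv a b = \sum_k (a k 0)^* * b k 0.
Proof. by rewrite /dotcv mxE; apply: eq_bigr => k _; rewrite !mxE. Qed.

Lemma dotcvC n (a b : 'cV[C]_n) : dotcv b a = (dotcv a b)^*.
Proof.
rewrite !dotcvE rmorph_sum; apply: eq_bigr => k _.
by rewrite rmorphM /= conjCK mulrC.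
Qed.

Lemma dotcvZl n k (a b : 'cV[C]_n) : dotcv (k *: a) b = k^* * dotcv a b.
Proof. by rewrite /dotcv linearZ /= map_mxZ -scalemxAl mxE. Qed.

Lemma dotcvZr n k (a b : 'cV[C]_n) : dotcv a (k *: b) = k * dotcv a b.
Proof. by rewrite /dotcv -scalemxAr mxE. Qed.

Lemma dotcv_mulmxr n (M : 'M[C]_n) (a b : 'cV[C]_n) :
  dotcv a (M *m b) = dotcv (M^t* *m a) b.
Proof. by rewrite /dotcv trmx_mul map_mxM trmxCK mulmxA. Qed.

Lemma sqnormcvE n (x : 'cV[C]_n) : sqnormcv x = \sum_k `|x k 0| ^+ 2.
Proof. by rewrite /sqnormcv dotcvE; apply: eq_bigr => k _; rewrite normCK mulrC. Qed.

Lemma sqnormcv_ge0 n (x : 'cV[C]_n) : 0 <= sqnormcv x.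
Proof. by rewrite sqnormcvE sumr_ge0 // => k _; rewrite exprn_ge0. Qed.

Lemma sqnormcv_eq0 n (x : 'cV[C]_n) : (sqnormcv x == 0) = (x == 0).
Proof.
rewrite sqnormcvE psumr_eq0 => [|k _]; last exact: exprn_ge0.
apply/allP/eqP => [x0|x0 k _]; last by rewrite x0 mxE normr0 expr0n /= eqxx.
apply/matrixP => i j; rewrite ord1 mxE; apply/eqP.
by have := x0 i (mem_index_enum i); rewrite /= sqrf_eq0 normr_eq0.
Qed.

Lemma sqnormcv0 n : sqnormcv (0 : 'cV[C]_n) = 0.
Proof. by apply/eqP; rewrite sqnormcv_eq0. Qed.

Lemma sqnormcv_gt0 n (x : 'cV[C]_n) : (0 < sqnormcv x) = (x != 0).
Proof. by rewrite lt_def sqnormcv_eq0 sqnormcv_ge0 andbT. Qed.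

Lemma sqnormcvZ n k (x : 'cV[C]_n) : sqnormcv (k *: x) = `|k| ^+ 2 * sqnormcv x.
Proof.
by rewrite !sqnormcvE mulr_sumr; apply: eq_bigr => i _; rewrite mxE normrM exprMn.
Qed.

Lemma sqnormcvN n (x : 'cV[C]_n) : sqnormcv (- x) = sqnormcv x.
Proof. by rewrite -scaleN1r sqnormcvZ normrN1 expr1n mul1r. Qed.

Lemma sqnormcvB n (a b : 'cV[C]_n) :
  sqnormcv (a - b) = sqnormcv a + sqnormcv b - (dotcv a b + (dotcv a b)^*).
Proof.
rewrite /sqnormcv -dotcvC !dotcvE -!big_split -sumrN -big_split /=.
by apply: eq_bigr => k _; rewrite !mxE rmorphB /=; ring.
Qed.

Lemma sqnormcvD_le n (a b : 'cV[C]_n) :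
  sqnormcv (a + b) <= 2%:R * sqnormcv a + 2%:R * sqnormcv b.
Proof.
rewrite !sqnormcvE !mulr_sumr -big_split /=; apply: ler_sum => k _.
have parallelogram (x y : C) :
    `|x + y| ^+ 2 + `|x - y| ^+ 2 = 2%:R * `|x| ^+ 2 + 2%:R * `|y| ^+ 2.
  by rewrite !normCK !rmorphD !rmorphN /=; ring.
by rewrite mxE -parallelogram lerDl exprn_ge0.
Qed.

Lemma mulmxtC_unitary n (U : 'M[C]_n) : U \is unitarymx -> U^t* *m U = 1%:M.
Proof. by move=> hU; rewrite -[U^t*]mul1mx mulmxKtV. Qed.

Lemma sqnormcv_unitary n (U : 'M[C]_n) (x : 'cV[C]_n) :
  U \is unitarymx -> sqnormcv (U *m x) = sqnormcv x.
Proof. by move=> hU; rewrite /sqnormcv dotcv_mulmxr mulmxA mulmxtC_unitary ?mul1mx. Qed.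

Lemma sqnormcv_delta n (i : 'I_n) : sqnormcv (delta_mx i 0 : 'cV[C]_n) = 1.
Proof.
rewrite sqnormcvE (bigD1 i) //= big1 => [|k /negPf ki]; rewrite mxE.
  by rewrite eqxx normr1 expr1n addr0.
by rewrite ki normr0 expr0n.
Qed.

Lemma mul_diag_delta n (d : 'rV[C]_n) (i : 'I_n) :
  diag_mx d *m delta_mx i 0 = d 0 i *: (delta_mx i 0 : 'cV[C]_n).
Proof.
apply/matrixP => a b; rewrite mul_diag_mx !mxE.
by case: eqP => [->|_]; rewrite ?mulr0 ?mul0r ?andFb ?mulr1.
Qed.

Lemma sqnormcv_diag_le n (d : 'rV[C]_n) (x : 'cV[C]_n) c :
  (forall i, x i 0 != 0 -> `|d 0 i| ^+ 2 <= c) ->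
  sqnormcv (diag_mx d *m x) <= c * sqnormcv x.
Proof.
move=> hd; rewrite !sqnormcvE mulr_sumr; apply: ler_sum => i _.
rewrite mul_diag_mx mxE normrM exprMn.
have [->|xi0] := eqVneq (x i 0) 0; first by rewrite normr0 expr0n /= !mulr0.
by rewrite ler_wpM2r ?exprn_ge0 ?hd.
Qed.

Lemma sqnormcv_diag_ge n (d : 'rV[C]_n) (x : 'cV[C]_n) c :
  (forall i, x i 0 != 0 -> c <= `|d 0 i| ^+ 2) ->
  c * sqnormcv x <= sqnormcv (diag_mx d *m x).
Proof.
move=> hd; rewrite !sqnormcvE mulr_sumr; apply: ler_sum => i _.
rewrite mul_diag_mx mxE normrM exprMn.
have [->|xi0] := eqVneq (x i 0) 0; first by rewrite normr0 expr0n /= !mulr0.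
by rewrite ler_wpM2r ?exprn_ge0 ?hd.
Qed.

Lemma sqnormcv_mulmx_le_sum n (A : 'M[C]_n) (u : 'cV[C]_n) :
  sqnormcv u = 1 -> sqnormcv (A *m u) <= \sum_i (\sum_j `|A i j|) ^+ 2.
Proof.
move=> u1; have coord_le1 j : `|u j 0| <= 1.
  rewrite -(ler_pXn2r (_ : 0 < 2)%N) ?nnegrE ?normr_ge0 // expr1n -u1 sqnormcvE.
  by rewrite (bigD1 j) //= lerDl sumr_ge0 // => k _; rewrite exprn_ge0.
rewrite sqnormcvE; apply: ler_sum => i _.
rewrite ler_pXn2r ?nnegrE ?normr_ge0 ?sumr_ge0 // mxE.
apply: le_trans (ler_norm_sum _ _ _) _; apply: ler_sum => j _.
by rewrite normrM ler_piMr ?normr_ge0.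
Qed.

Lemma hermsymmxP n (A : 'M[C]_n) : reflect (A^t* = A) (A \is hermsymmx).
Proof. by rewrite is_hermitianmxE expr0 scale1r eq_sym; apply: eqP. Qed.

Lemma hermsymmxD n (A B : 'M[C]_n) :
  A \is hermsymmx -> B \is hermsymmx -> A + B \is hermsymmx.
Proof.
by move=> /hermsymmxP hA /hermsymmxP hB; apply/hermsymmxP; rewrite linearD /= map_mxD hA hB.
Qed.

Lemma hermsymmx_conj n (V A : 'M[C]_n) :
  A \is hermsymmx -> V^t* *m A *m V \is hermsymmx.
Proof.
by move=> /hermsymmxP hA; apply/hermsymmxP; rewrite !trmx_mul !map_mxM trmxCK hA mulmxA.
Qed.

Lemma diag_hermsymmx n (d : 'rV[C]_n) :
  (forall i, 0 <= d 0 i) -> diag_mx d \is hermsymmx.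
Proof.
move=> d0; apply/hermsymmxP; rewrite tr_diag_mx map_diag_mx; congr diag_mx.
by apply/matrixP => i j; rewrite ord1 mxE; exact: geC0_conj.
Qed.

Lemma dotcv_herm_real n (A : 'M[C]_n) (z : 'cV[C]_n) :
  A \is hermsymmx -> dotcv z (A *m z) \is Num.real.
Proof.
move=> /hermsymmxP hA; rewrite CrealE -dotcvC.
by rewrite dotcv_mulmxr hA.
Qed.

Lemma psd_add_eigenvalue_ge n (A H : 'M[C]_n) e (z : 'cV[C]_n) s :
  A \is hermsymmx -> H \is hermsymmx -> (forall u, 0 <= dotcv u (A *m u)) ->
  (forall x, sqnormcv (H *m x) <= e ^+ 2 * sqnormcv x) -> 0 <= e ->
  z != 0 -> (A + H) *m z = s *: z -> - e <= s.
Proof.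
move=> hA hH psdA hHe e0 nz eig; rewrite -sqnormcv_gt0 in nz.
set w := A *m z; set t := dotcv z w.
have sR : s \is Num.real.
  have := dotcv_herm_real z (hermsymmxD hA hH).
  rewrite eig dotcvZr realrM //; last exact: gtr0_real.
  by rewrite lt0r_neq0.
have [s0|s0] := real_leP (real0 C) sR; first by rewrite (le_trans _ s0) // oppr_le0.
have Hz : H *m z = s *: z - w by rewrite -eig mulmxDl addrAC subrr add0r.
have t0 : 0 <= t := psdA z.
(* For [s < 0], [<z, A z> >= 0] gives [|H z|^2 = |s z - A z|^2 >= s^2 |z|^2]. *)
have : s ^+ 2 * sqnormcv z <= e ^+ 2 * sqnormcv z.
  apply: le_trans (hHe z); rewrite Hz sqnormcvB sqnormcvZ dotcvZl.
  rewrite -/t (CrealP sR) rmorphM /= (CrealP sR) (geC0_conj t0) real_normK //.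
  rewrite -addrA lerDl addr_ge0 ?sqnormcv_ge0 // oppr_ge0 -mulr2n mulrn_wle0 //.
  by rewrite nmulr_rle0.
rewrite ler_pM2r // -(real_normK sR) ler_pXn2r ?nnegrE ?normr_ge0 //.
by rewrite (ltr0_norm s0) lerNl.
Qed.

Lemma psd_diag_ge0 n (U : 'M[C]_n) (l : 'rV[C]_n) :
  U \is unitarymx -> (forall u, 0 <= dotcv u (U *m diag_mx l *m U^t* *m u)) ->
  forall k, 0 <= l 0 k.
Proof.
move=> hU psd k; have := psd (U *m delta_mx k 0).
rewrite -!mulmxA (mulmxA (U^t*)) mulmxtC_unitary // mul1mx.
rewrite dotcv_mulmxr mulmxA mulmxtC_unitary // mul1mx mul_diag_delta dotcvZr.
by rewrite -/(sqnormcv _) sqnormcv_delta mulr1.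
Qed.

Lemma hermsymmx_svd_adj n (Q V W : 'M[C]_n) (d : 'rV[C]_n) :
  Q \is hermsymmx -> (forall i, 0 <= d 0 i) ->
  Q = V *m diag_mx d *m W^t* -> Q = W *m diag_mx d *m V^t*.
Proof.
move=> /hermsymmxP hQ /diag_hermsymmx /hermsymmxP hD eQ.
by rewrite -hQ {1}eQ !trmx_mul !map_mxM trmxCK hD mulmxA.
Qed.

(** * The absolute value of a Hermitian matrix *)

Lemma comm_sqr_nonneg_diag n (S : 'M[C]_n) (d : 'rV[C]_n) :
  (forall i, 0 <= d 0 i) -> S *m S = diag_mx d *m diag_mx d ->
  S *m diag_mx d = diag_mx d *m S.
Proof.
move=> d0 SS.
have /matrixP SD2 : S *m (diag_mx d *m diag_mx d) = diag_mx d *m diag_mx d *m S.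
  by rewrite -SS mulmxA.
apply/matrixP => i j; rewrite mul_mx_diag mul_diag_mx !mxE.
have := SD2 i j; rewrite mulmx_diag mul_mx_diag mul_diag_mx !mxE.
have [->|nz] := eqVneq (S i j) 0; first by rewrite !mul0r !mulr0.
move=> h; have /eqP : d 0 i ^+ 2 = d 0 j ^+ 2.
  by apply: (mulIf nz); rewrite !expr2 -h mulrC.
by rewrite eqrXn2 // => /eqP ->; rewrite mulrC.
Qed.

Lemma similar_trig_hermsymmx n (P T : 'M[C]_n) :
  P \is unitarymx -> T \is hermsymmx -> similar_trig P T ->
  P *m T *m P^t* = diag_mx (\row_i (P *m T *m P^t*) i i).
Proof.
move=> hP /hermsymmxP hT; rewrite /similar_to conjumx ?unitarymx_unit // invmx_unitary //.
set M := P *m T *m P^t* => /is_trig_mxP Mtrig.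
have MH : M^t* = M by rewrite /M !trmx_mul !map_mxM trmxCK hT mulmxA.
clearbody M; apply/matrixP => i j; rewrite !mxE.
case: (ltngtP i j) => [ij|ji|/val_inj ->]; last by rewrite eqxx mulr1n.
- by rewrite Mtrig //; case: eqP => // e; move: ij; rewrite e ltnn.
- have /matrixP /(_ i j) := MH; rewrite !mxE Mtrig // conjC0 => <-.
  by case: eqP => // e; move: ji; rewrite e ltnn.
Qed.

Lemma hermsymmx_codiag n (A B : 'M[C]_n) :
  A \is hermsymmx -> B \is hermsymmx -> A *m B = B *m A ->
  exists P : 'M[C]_n, exists a b : 'rV[C]_n,
  [/\ P \is unitarymx, P *m A *m P^t* = diag_mx a & P *m B *m P^t* = diag_mx b].
Proof.
move=> hA hB /cotrigonalization2 [P hP /andP[tA tB]].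
exists P, (\row_i (P *m A *m P^t*) i i), (\row_i (P *m B *m P^t*) i i).
by split; [|exact: similar_trig_hermsymmx hP hA tA|exact: similar_trig_hermsymmx hP hB tB].
Qed.

Lemma normr_sub_le_of_sqr_eq (d s e : C) :
  0 <= d -> 0 <= e -> - e <= s -> s ^+ 2 = d ^+ 2 -> `|d - s| <= 2%:R * e.
Proof.
move=> d0 e0 se /eqP; rewrite -subr_eq0 subr_sqr mulf_eq0 subr_eq0 addr_eq0.
case/orP => /eqP sd; rewrite sd; first by rewrite subrr normr0 mulr_ge0 ?ler0n.
rewrite opprK -mulr2n normrMn ger0_norm // mulr_natl lerMn2r /=.
by rewrite -lerN2 -sd.
Qed.

Lemma sqnormcv_diag_sub_hermsymmx n (S : 'M[C]_n) (d : 'rV[C]_n) e :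
  S \is hermsymmx -> (forall i, 0 <= d 0 i) -> 0 <= e ->
  S *m S = diag_mx d *m diag_mx d ->
  (forall (f : 'cV[C]_n) s, f != 0 -> S *m f = s *: f -> - e <= s) ->
  forall x, sqnormcv ((diag_mx d - S) *m x) <= 4%:R * e ^+ 2 * sqnormcv x.
Proof.
move=> hS d0 e0 SS eigS x.
(* In a common eigenbasis, [S^2 = D^2] makes [d' = |s|], and [|s| - s <= 2 e]. *)
have [P [s [d' [hP eS eD]]]] :=
  hermsymmx_codiag hS (diag_hermsymmx d0) (comm_sqr_nonneg_diag d0 SS).
have PtP := mulmxtC_unitary hP.
have SPt : S *m P^t* = P^t* *m diag_mx s by rewrite -eS !mulmxA PtP mul1mx.
have s_ge i : - e <= s 0 i.
  apply: (eigS (P^t* *m delta_mx i 0)).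
    by rewrite -sqnormcv_gt0 sqnormcv_unitary ?trmxC_unitary ?sqnormcv_delta ?ltr01.
  by rewrite mulmxA SPt -mulmxA mul_diag_delta scalemxAr.
have d'_ge0 i : 0 <= d' 0 i.
  have /matrixP /(_ i i) := eD; rewrite [RHS]mxE eqxx mulr1n => <-.
  rewrite mxE sumr_ge0 // => k _; rewrite mul_mx_diag !mxE mulrAC -normCK.
  by rewrite mulr_ge0 ?exprn_ge0.
have sd i : s 0 i ^+ 2 = d' 0 i ^+ 2.
  have : diag_mx s *m diag_mx s = diag_mx d' *m diag_mx d'.
    by rewrite -eS -eD !mulmxA !mulmxKtV // -!(mulmxA P) SS.
  by rewrite !mulmx_diag => /matrixP /(_ i i); rewrite !mxE eqxx !mulr1n !expr2.
rewrite -(sqnormcv_unitary _ hP) -(sqnormcv_unitary x hP).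
have -> : P *m ((diag_mx d - S) *m x) = diag_mx (d' - s) *m (P *m x).
  rewrite linearB /= -eD -eS -mulmxBl -mulmxBr -!mulmxA.
  by rewrite (mulmxA (P^t*)) PtP mul1mx.
apply: sqnormcv_diag_le => i _; rewrite !mxE.
rewrite (_ : 4%:R * e ^+ 2 = (2%:R * e) ^+ 2); last by rewrite exprMn -natrX.
by rewrite ler_pXn2r ?nnegrE ?normr_ge0 ?mulr_ge0 ?ler0n ?normr_sub_le_of_sqr_eq.
Qed.

Lemma sqnormcv_abs_sub_hermsymmx n (Q V W : 'M[C]_n) (d : 'rV[C]_n) e :
  Q \is hermsymmx -> V \is unitarymx -> W \is unitarymx ->
  Q = V *m diag_mx d *m W^t* -> (forall i, 0 <= d 0 i) -> 0 <= e ->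
  (forall (z : 'cV[C]_n) s, z != 0 -> Q *m z = s *: z -> - e <= s) ->
  forall x, sqnormcv ((V *m diag_mx d *m V^t* - Q) *m x) <= 4%:R * e ^+ 2 * sqnormcv x.
Proof.
move=> hQ hV hW eQ d0 e0 eigQ x.
have VVt : V *m V^t* = 1%:M by apply/unitarymxP.
have VtV := mulmxtC_unitary hV.
set S := V^t* *m Q *m V.
have eQS : Q = V *m S *m V^t* by rewrite /S !mulmxA VVt mul1mx mulmxtVK.
have SS : S *m S = diag_mx d *m diag_mx d.
  have eQ' := hermsymmx_svd_adj hQ d0 eQ.
  have S1 : S = V^t* *m W *m diag_mx d by rewrite /S eQ' !mulmxA mulmxKtV.
  have S2 : S = diag_mx d *m W^t* *m V by rewrite /S eQ !mulmxA VtV mul1mx.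
  by rewrite {1}S2 S1 !mulmxA mulmxtVK // mulmxKtV.
have hS : S \is hermsymmx := hermsymmx_conj V hQ.
clearbody S.
have eigS (f : 'cV[C]_n) s : f != 0 -> S *m f = s *: f -> - e <= s.
  move=> nf Sf; apply: (eigQ (V *m f)).
    by rewrite -sqnormcv_gt0 sqnormcv_unitary // sqnormcv_gt0.
  by rewrite eQS -!mulmxA (mulmxA (V^t*)) VtV mul1mx Sf scalemxAr.
rewrite eQS -mulmxBl -mulmxBr -!mulmxA sqnormcv_unitary //.
rewrite -[sqnormcv x](sqnormcv_unitary x (_ : V^t* \is unitarymx)) ?trmxC_unitary //.
exact: sqnormcv_diag_sub_hermsymmx hS d0 e0 SS eigS _.
Qed.

(** * Weyl's inequality and the truncation bound *)

Lemma exists_head_vector n r (A : 'M[C]_n) : (r < n)%N ->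
  exists2 c : 'cV[C]_n, c != 0 &
    (forall k : 'I_n, (r < k)%N -> c k 0 = 0) /\
    (forall j : 'I_n, (j < r)%N -> (A *m c) j 0 = 0).
Proof.
move=> rn; have n_gt0 : (0 < n)%N by apply: leq_ltn_trans rn.
(* The columns of [M] are the first [r] rows of [A], then [e_(r+1)], ...,
   [e_(n-1)] and a zero column; [c] is the transpose of a nonzero [v] with
   [v *m M = 0]. *)
pose M := \matrix_(k < n, j < n) (if (j < r)%N then A j k else ((k : nat) == j.+1)%:R).
have last_lt : (n.-1 < n)%N by rewrite prednK.
have : \det M == 0.
  rewrite -det_tr; apply/det0P; exists (delta_mx 0 (Ordinal last_lt)).
    by apply/eqP => /matrixP /(_ 0 (Ordinal last_lt)) /eqP; rewrite !mxE !eqxx oner_eq0.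
  rewrite -rowE; apply/matrixP => i k; rewrite !mxE /=.
  have -> : (n.-1 < r)%N = false by apply/negbTE; rewrite -leqNgt -ltnS prednK.
  by case: eqP => // kn; have := ltn_ord k; rewrite kn prednK ?ltnn.
case/det0P => v v0 vM; exists v^T; first by rewrite trmx_eq0.
split=> [k rk|j jr].
  have k_gt0 : (0 < k)%N by apply: leq_ltn_trans rk.
  have pk_lt : (k.-1 < n)%N by rewrite (leq_ltn_trans (leq_pred k)).
  have pk_r : (k.-1 < r)%N = false by rewrite ltnNge -ltnS prednK // rk.
  have /matrixP /(_ 0 (Ordinal pk_lt)) := vM.
  rewrite !mxE (bigD1 k) //= big1 => [|i ik]; rewrite !mxE pk_r prednK //.
    by rewrite eqxx mulr1 addr0.
  by case: eqP => [/val_inj ik'|]; [rewrite ik' eqxx in ik | rewrite mulr0].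
have /matrixP /(_ 0 j) := vM; rewrite !mxE => vMj; rewrite -[RHS]vMj.
by apply: eq_bigr => k _; rewrite !mxE jr mulrC.
Qed.

Lemma singular_value_sqr_le n (r : 'I_n) (Qs H U V W : 'M[C]_n) (l d : 'rV[C]_n) e :
  U \is unitarymx -> V \is unitarymx -> W \is unitarymx ->
  Qs = U *m diag_mx l *m U^t* -> Qs + H = W *m diag_mx d *m V^t* ->
  (forall k : 'I_n, (r <= k)%N -> `|l 0 k| <= `|l 0 r|) ->
  (forall k : 'I_n, (k <= r)%N -> `|d 0 r| <= `|d 0 k|) ->
  (forall x, sqnormcv (H *m x) <= e ^+ 2 * sqnormcv x) ->
  `|d 0 r| ^+ 2 <= 2%:R * (`|l 0 r| ^+ 2 + e ^+ 2).
Proof.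
move=> hU hV hW eQs eQ hl hd hH.
(* [V c] lies in the span of the first [r + 1] right singular vectors of [Qs + H]
   and is orthogonal to the first [r] eigenvectors of [Qs]. *)
have [c c0 [c_head Ac0]] := exists_head_vector (U^t* *m V) (ltn_ord r).
have lower : `|d 0 r| ^+ 2 * sqnormcv c <= sqnormcv ((Qs + H) *m (V *m c)).
  rewrite eQ -!mulmxA (mulmxA (V^t*)) mulmxtC_unitary // mul1mx sqnormcv_unitary //.
  apply: sqnormcv_diag_ge => k ck; rewrite ler_pXn2r ?nnegrE ?normr_ge0 // hd //.
  by rewrite leqNgt; apply: contra ck => /c_head ->.
have upper : sqnormcv (Qs *m (V *m c)) <= `|l 0 r| ^+ 2 * sqnormcv c.
  have hUt : U^t* \is unitarymx by rewrite trmxC_unitary.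
  rewrite eQs -!mulmxA sqnormcv_unitary // (mulmxA (U^t*)).
  rewrite -(sqnormcv_unitary c hV) -(sqnormcv_unitary (V *m c) hUt) (mulmxA (U^t*) V c).
  apply: sqnormcv_diag_le => k yk; rewrite ler_pXn2r ?nnegrE ?normr_ge0 // hl //.
  by rewrite leqNgt; apply: contra yk => /Ac0 ->.
rewrite -(ler_pM2r (_ : 0 < sqnormcv c)) ?sqnormcv_gt0 //.
apply: le_trans lower _; rewrite mulmxDl.
have := hH (V *m c); rewrite (sqnormcv_unitary c hV) => hHy.
apply: le_trans (sqnormcvD_le _ _) _.
apply: le_trans (lerD (ler_wpM2l (ler0n _ 2) upper) (ler_wpM2l (ler0n _ 2) hHy)) _.
by rewrite -mulrDr -mulrDl mulrA.
Qed.

Lemma sqnormcv_psd_sub_trunc n r (Qs H V W : 'M[C]_n) (d : 'rV[C]_n) e a :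
  Qs \is hermsymmx -> (forall u, 0 <= dotcv u (Qs *m u)) -> H \is hermsymmx ->
  (forall x, sqnormcv (H *m x) <= e ^+ 2 * sqnormcv x) -> 0 <= e ->
  V \is unitarymx -> W \is unitarymx -> (forall i, 0 <= d 0 i) ->
  Qs + H = V *m diag_mx d *m W^t* ->
  0 <= a -> (forall k : 'I_n, (r <= k)%N -> d 0 k ^+ 2 <= a) ->
  let Dr := diag_mx (\row_i (if (i < r)%N then d 0 i else 0)) in
  forall x, sqnormcv ((Qs - V *m Dr *m V^t*) *m x) <= (2%:R * a + 20%:R * e ^+ 2) * sqnormcv x.
Proof.
move=> hQs psdQs hH hHe e0 hV hW d0 eQ a0 tail Dr x.
set Vabs := V *m diag_mx d *m V^t*.
have absQ : sqnormcv ((Vabs - (Qs + H)) *m x) <= 4%:R * e ^+ 2 * sqnormcv x.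
  apply: (sqnormcv_abs_sub_hermsymmx (hermsymmxD hQs hH) hV hW eQ d0 e0 _ x).
  by move=> z s; apply: psd_add_eigenvalue_ge.
have tailQ : sqnormcv ((Vabs - V *m Dr *m V^t*) *m x) <= a * sqnormcv x.
  have hVt : V^t* \is unitarymx by rewrite trmxC_unitary.
  rewrite -mulmxBl -mulmxBr -!mulmxA sqnormcv_unitary // -(sqnormcv_unitary x hVt).
  rewrite -linearB /=; apply: sqnormcv_diag_le => k _; rewrite !mxE.
  by case: ltnP => kr; rewrite ?subrr ?normr0 ?expr0n // subr0 ger0_norm ?tail.
have decomp : (Vabs - V *m Dr *m V^t*) - ((Vabs - (Qs + H)) + H) = Qs - V *m Dr *m V^t*.
  have -> : Vabs - (Qs + H) + H = Vabs - Qs by rewrite opprD addrA subrK.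
  by rewrite opprB addrC addrA subrK.
rewrite -decomp mulmxBl (mulmxDl (Vabs - (Qs + H))).
apply: le_trans (sqnormcvD_le _ _) _; rewrite sqnormcvN.
apply: le_trans (lerD (ler_wpM2l (ler0n _ 2) tailQ)
  (ler_wpM2l (ler0n _ 2) (sqnormcvD_le _ _))) _.
apply: le_trans (lerD (lexx _) (ler_wpM2l (ler0n _ 2)
  (lerD (ler_wpM2l (ler0n _ 2) absQ) (ler_wpM2l (ler0n _ 2) (hHe x))))) _.
by rewrite le_eqVlt; apply/orP; left; apply/eqP; ring.
Qed.

End ComplexMatrices.

Section SpectralNorm.
Variable R : realType.
Local Notation C := R[i]%C.

Lemma vnorm_ge0 n (x : 'cV[C]_n) : 0 <= vnorm x.
Proof. exact: sqrtr_ge0. Qed.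

Lemma sqr_vnorm n (x : 'cV[C]_n) : ((vnorm x ^+ 2)%:C)%C = sqnormcv x.
Proof.
rewrite sqr_sqrtr; last by apply: sumr_ge0 => k _; exact: sqr_ge0.
by rewrite sqnormcvE rmorph_sum; apply: eq_bigr => k _; rewrite rmorphXn.
Qed.

Lemma ler_vnorm n (x : 'cV[C]_n) (c : R) :
  0 <= c -> (vnorm x <= c) = (sqnormcv x <= ((c ^+ 2)%:C)%C).
Proof. by move=> c0; rewrite -sqr_vnorm lecR ler_pXn2r ?nnegrE ?vnorm_ge0. Qed.

Lemma vnorm_eq1 n (u : 'cV[C]_n) : vnorm u = 1 <-> sqnormcv u = 1.
Proof.
rewrite -sqr_vnorm; split=> [->|/complexI /eqP]; first by rewrite expr1n.
by rewrite sqrp_eq1 ?vnorm_ge0 // => /eqP.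
Qed.

Lemma spnorm_ub n (A : 'M[C]_n) (u : 'cV[C]_n) :
  vnorm u = 1 -> vnorm (A *m u) <= spnorm A.
Proof.
move=> u1; apply: ub_le_sup; last by exists u.
pose B : R := \sum_i (\sum_j ComplexField.Normc.normc (A i j)) ^+ 2.
exists (B + 1) => _ [v [/vnorm_eq1 v1 ->]].
have : vnorm (A *m v) ^+ 2 <= B.
  rewrite -lecR sqr_vnorm (le_trans (sqnormcv_mulmx_le_sum A v1)) //.
  by rewrite /B rmorph_sum; apply: ler_sum => i _; rewrite rmorphXn rmorph_sum.
have := vnorm_ge0 (A *m v); nra.
Qed.

Lemma spnorm_le n (A : 'M[C]_n) (c : R) : (0 < n)%N -> 0 <= c ->
  (forall x, sqnormcv (A *m x) <= ((c ^+ 2)%:C)%C * sqnormcv x) -> spnorm A <= c.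
Proof.
move=> n_gt0 c0 hA; pose e0 : 'cV[C]_n := delta_mx (Ordinal n_gt0) 0.
apply: ge_sup.
  by exists (vnorm (A *m e0)), e0; split=> //; apply/vnorm_eq1/sqnormcv_delta.
move=> _ [u [/vnorm_eq1 u1 ->]]; rewrite ler_vnorm //.
by have := hA u; rewrite u1 mulr1.
Qed.

Lemma sqnormcv_mulmx_le n (A : 'M[C]_n) (x : 'cV[C]_n) :
  sqnormcv (A *m x) <= ((spnorm A)%:C)%C ^+ 2 * sqnormcv x.
Proof.
have [->|x0] := eqVneq x 0; first by rewrite mulmx0 !sqnormcv0 mulr0.
set a := vnorm x; have a_gt0 : 0 < a.
  rewrite lt_def vnorm_ge0 andbT; apply: contra x0 => /eqP a0.
  by rewrite -sqnormcv_eq0 -sqr_vnorm -/a a0 expr0n /= rmorph0.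
have u1 : vnorm (((a^-1)%:C)%C *: x) = 1.
  apply/vnorm_eq1; rewrite sqnormcvZ -sqr_vnorm ger0_norm ?ler0c ?invr_ge0 ?ltW //.
  by rewrite -rmorphXn -rmorphM -exprMn mulVf ?gt_eqF ?expr1n.
have h : sqnormcv (A *m (((a^-1)%:C)%C *: x)) <= ((spnorm A ^+ 2)%:C)%C.
  rewrite -ler_vnorm ?spnorm_ub //.
  exact: le_trans (vnorm_ge0 _) (spnorm_ub A u1).
have eh : ((a^-1 ^+ 2 * vnorm (A *m x) ^+ 2)%:C)%C =
    `|((a^-1)%:C)%C| ^+ 2 * sqnormcv (A *m x).
  by rewrite -sqr_vnorm ger0_norm ?ler0c ?invr_ge0 ?ltW // rmorphM rmorphXn.
rewrite -scalemxAr sqnormcvZ -eh lecR exprVn ler_pdivrMl ?exprn_gt0 // in h.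
have eg : ((spnorm A ^+ 2 * a ^+ 2)%:C)%C = ((spnorm A)%:C)%C ^+ 2 * sqnormcv x.
  by rewrite -sqr_vnorm rmorphM rmorphXn.
by rewrite -sqr_vnorm -eg lecR mulrC.
Qed.

Lemma spnorm_ge0 n (A : 'M[C]_n) : (0 < n)%N -> 0 <= spnorm A.
Proof.
move=> n_gt0; pose e0 : 'cV[C]_n := delta_mx (Ordinal n_gt0) 0.
by apply: le_trans (vnorm_ge0 (A *m e0)) (spnorm_ub _ _); apply/vnorm_eq1/sqnormcv_delta.
Qed.

Lemma psdmx_dotcv n (A : 'M[C]_n) : psdmx A -> forall u, 0 <= dotcv u (A *m u).
Proof. by case=> _ psdA u; rewrite /dotcv mulmxA. Qed.

Lemma eigen_seq_psd_ge0 n (A : 'M[C]_n) (lam : nat -> R) :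
  psdmx A -> eigen_seq A lam -> forall k, 0 <= lam k.
Proof.
move=> psdA [[U [hU eA]] [_ lam0]] k; have [kn|nk] := ltnP k n; last by rewrite lam0.
have := psd_diag_ge0 (l := \row_(i < n) ((lam i)%:C)%C) hU.
rewrite -[diag_mx _]/(rdiag lam) -eA => /(_ (psdmx_dotcv psdA) (Ordinal kn)).
by rewrite mxE ler0c.
Qed.

Lemma svd_sigma_sqr_le n r k (Qs H V W : 'M[C]_n) (lam sigma : nat -> R) :
  psdmx Qs -> eigen_seq Qs lam -> H \is hermsymmx -> svd (Qs + H) V W sigma ->
  (r <= k < n)%N -> sigma k ^+ 2 <= 2%:R * (lam r ^+ 2 + spnorm H ^+ 2).
Proof.
move=> psdQs eigQs hH [hV [hW [sg0 [sg_mono eQ]]]] /andP[rk kn].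
have [[U [hU eQs]] [lam_mono _]] := eigQs; have lam0 := eigen_seq_psd_ge0 psdQs eigQs.
have rn : (r < n)%N := leq_ltn_trans rk kn.
have d0 (i : 'I_n) : 0 <= (\row_(j < n) ((sigma j)%:C)%C) 0 i by rewrite mxE ler0c sg0.
have eQ' := hermsymmx_svd_adj (hermsymmxD psdQs.1 hH) d0 eQ.
have := singular_value_sqr_le (r := Ordinal rn) hU hV hW eQs eQ' _ _ (sqnormcv_mulmx_le H).
rewrite !mxE !ger0_norm ?ler0c ?lam0 ?sg0 //=.
have hl (j : 'I_n) : (r <= j)%N -> `|(\row_(i < n) ((lam i)%:C)%C) 0 j| <= ((lam r)%:C)%C.
  by move=> rj; rewrite mxE ger0_norm ?ler0c ?lam0 // lecR lam_mono // rj ltn_ord.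
have hd (j : 'I_n) :
    (j <= r)%N -> ((sigma r)%:C)%C <= `|(\row_(i < n) ((sigma i)%:C)%C) 0 j|.
  by move=> jr; rewrite mxE ger0_norm ?ler0c ?sg0 // lecR sg_mono // jr.
have eR : ((2%:R * (lam r ^+ 2 + spnorm H ^+ 2))%:C)%C =
    2%:R * (((lam r)%:C)%C ^+ 2 + ((spnorm H)%:C)%C ^+ 2).
  by rewrite rmorphM rmorph_nat rmorphD !rmorphXn.
have eL : ((sigma r ^+ 2)%:C)%C = ((sigma r)%:C)%C ^+ 2 by rewrite rmorphXn.
move=> /(_ hl hd); rewrite -eR -eL lecR; apply: le_trans.
by rewrite ler_pXn2r ?nnegrE ?sg0 // sg_mono // rk.
Qed.

Lemma spnorm_psd_sub_trunc_le n r (Qs H V W : 'M[C]_n) (lam sigma : nat -> R) :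
  (0 < n)%N -> psdmx Qs -> eigen_seq Qs lam -> H \is hermsymmx ->
  svd (Qs + H) V W sigma ->
  spnorm (Qs - trunc_r V sigma r) <= 5%:R * (lam r + spnorm H).
Proof.
move=> n_gt0 psdQs eigQs hH svdQ; have [hV [hW [sg0 [_ eQ]]]] := svdQ.
have e0 : 0 <= spnorm H := spnorm_ge0 H n_gt0.
have lam_r0 : 0 <= lam r := eigen_seq_psd_ge0 psdQs eigQs r.
pose d := \row_(j < n) ((sigma j)%:C)%C.
have d0 (i : 'I_n) : 0 <= d 0 i by rewrite mxE ler0c sg0.
have etrunc : trunc_r V sigma r =
    V *m diag_mx (\row_(i < n) (if (i < r)%N then d 0 i else 0)) *m V^t*.
  rewrite /trunc_r /rdiag; congr (_ *m diag_mx _ *m _).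
  by apply/rowP => i; rewrite !mxE; case: ifP.
have tail (k : 'I_n) : (r <= k)%N ->
    d 0 k ^+ 2 <= ((2%:R * (lam r ^+ 2 + spnorm H ^+ 2))%:C)%C.
  move=> rk; have eL : ((sigma k ^+ 2)%:C)%C = ((sigma k)%:C)%C ^+ 2 by rewrite rmorphXn.
  by rewrite mxE -eL lecR (svd_sigma_sqr_le psdQs eigQs hH svdQ) // rk ltn_ord.
apply: spnorm_le n_gt0 _ _ => [|x]; first by rewrite mulr_ge0 ?ler0n ?addr_ge0.
have := sqnormcv_psd_sub_trunc psdQs.1 (psdmx_dotcv psdQs) hH (sqnormcv_mulmx_le H)
  _ hV hW d0 eQ _ tail x.
rewrite -etrunc ler0c e0 ler0c mulr_ge0 ?ler0n ?addr_ge0 ?sqr_ge0 // => /(_ isT isT).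
move=> /le_trans; apply; apply: ler_wpM2r; first exact: sqnormcv_ge0.
have eB : ((2%:R * (2%:R * (lam r ^+ 2 + spnorm H ^+ 2)) + 20%:R * spnorm H ^+ 2)%:C)%C =
    2%:R * ((2%:R * (lam r ^+ 2 + spnorm H ^+ 2))%:C)%C + 20%:R * ((spnorm H)%:C)%C ^+ 2.
  by rewrite rmorphD !rmorphM !rmorph_nat !rmorphD !rmorphXn.
by rewrite -eB lecR; nra.
Qed.

Lemma delta_star_le (lam : nat -> R) r : delta_star lam r <= lam r.-1.
Proof. by rewrite /delta_star; elim/big_rec: _ => // i x _ hx; rewrite ge_min hx orbT. Qed.

End SpectralNorm.

Theorem lemma12 :
  exists K : nat,
  forall (R : realType) (n rs r : nat) (Qs H V W : 'M[R[i]%C]_n)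
    (lam sigma : nat -> R),
  psdmx Qs -> \rank Qs = rs -> eigen_seq Qs lam ->
  H \is hermsymmx ->
  (1 <= r <= n)%N ->
  svd (Qs + H) V W sigma ->
  0 < delta_star lam r ->
  spnorm (Qs - trunc_r V sigma r) <=
    K%:R * (lam r + lam 0%N / delta_star lam r * spnorm H).
Proof.
exists 5%N => R n rs r Qs H V W lam sigma psdQs _ eigQs hH /andP[r_gt0 rn] svdQ delta_gt0.
have n_gt0 : (0 < n)%N := leq_trans r_gt0 rn.
apply: le_trans (spnorm_psd_sub_trunc_le r n_gt0 psdQs eigQs hH svdQ) _.
rewrite ler_wpM2l ?ler0n // lerD2l.
(* [delta_star] only enters through [lam 0 / delta_star >= 1]. *)
have ratio_ge1 : 1 <= lam 0%N / delta_star lam r.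
  rewrite ler_pdivlMr // mul1r; apply: le_trans (delta_star_le lam r) _.
  by apply: eigQs.2.1; rewrite leq0n /= (leq_trans _ rn) // ltn_predL.
by rewrite -[X in X <= _]mul1r ler_wpM2r ?spnorm_ge0.
Qed.
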